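(* Let $G$ be a finite group, $p$ a prime, and let $S_1\times\cdots\times S_t\trianglelefteq G$, where the $S_i$ are subgroups permuted by $G$ under conjugation. Let $S=S_1$. Assume there exists $\alpha\in\mathrm{Irr}(N_G(S)/C_G(S))$ lying in the principal $p$-block such that $S$ is not contained in $\ker\alpha$ (where $\alpha$ is viewed as a character of $N_G(S)$ by inflation). Then $\alpha^G\in\mathrm{Irr}(B_0(G))$.
   Context: $B_0(G)$ is the principal $p$-block of $G$; $\alpha^G$ denotes the induced character from $N_G(S)$ to $G$. *)

From HB Require Import structures.
From mathcomp Require Import all_boot all_order all_algebra all_fingroup all_solvable all_field all_character.
Set Implicit Arguments. Unset Strict Implicit. Unset Printing Implicit Defensive.
Import GRing.Theory Num.Theory.
Local Open Scope ring_scope.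

(* M is a maximal ideal of the ring Aint of algebraic integers (in algC)
   containing the prime p. *)
Definition max_ideal_over (p : nat) (M : pred algC) : Prop :=
  {subset M <= Aint} /\
      0 \in M /\
      (forall x y, x \in M -> y \in M -> x - y \in M) /\
      (forall a x, a \in Aint -> x \in M -> a * x \in M) /\
      p%:R \in M /\
      1 \notin M /\
      (forall a, a \in Aint -> a \notin M ->
         exists2 b, b \in Aint & a * b - 1 \in M).

(* Central character value omega_chi(K^) on the class sum of K = x^G. *)
Definition omega (gT : finGroupType) (G : {group gT}) (chi : 'CF(G)) (x : gT)
  : algC := #|(x ^: G)%g|%:R * chi x / chi 1%g.

(* chi \in Irr(B_0(G)) for the p-blocks defined w.r.t. the maximal ideal M:
   chi irreducible and omega_chi = omega_{1_G} modulo M on all class sums. *)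
Definition in_principal_block (gT : finGroupType) (M : pred algC)
  (G : {group gT}) (chi : 'CF(G)) : Prop :=
  chi \in irr G /\
  (forall x, x \in G -> omega chi x - #|(x ^: G)%g|%:R \in M).

From HB Require Import structures.
From mathcomp Require Import all_boot all_order all_algebra all_fingroup all_solvable all_field all_character.
From mathcomp Require Import ring.
Set Implicit Arguments.
Unset Strict Implicit.
Unset Printing Implicit Defensive.
Import GRing.Theory Num.Theory.
Local Open Scope group_scope.
Local Open Scope ring_scope.

(* Write H = N_G(S), C = C_G(S) and alpha for beta inflated to H.  Every
   G-conjugate of S other than S lies in the complement R of S in N, and
   R <= C <= ker alpha.  So a constituent theta of alpha_N with S not in
   ker theta has inertia group inside H, and alpha^G is irreducible by the
   Clifford correspondence.
   For the block condition, omega_{alpha^G}(x^G) - |x^G| is the sum over z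
   in x^G of alpha(z)/alpha(1) - 1, whose terms are -1 off H.  The terms over
   x^G /\ H form a class-weighted sum of omega_beta - omega_1 on H/C, hence
   lie in M.  The sum of beta over the normal subgroup S C/C, which is not in
   ker beta, is 0; this puts |S C/C| in M, so p divides |S|.  An element of
   order p in S then acts without fixed points on x^G \ H, so p divides the
   number of -1 terms. *)

Section ClassSums.
Variable gT : finGroupType.
Implicit Types G H : {group gT}.

Lemma sum_conjg_class G x (F : gT -> algC) : x \in G ->
  \sum_(y in G) F (x ^ y)%g = #|'C_G[x]|%:R * \sum_(z in x ^: G) F z.
Proof.
move=> Gx; rewrite (partition_big (conjg x) (mem (x ^: G))) /=; last first.
  by move=> y Gy; apply: memJ_class.
rewrite mulr_sumr; apply: eq_bigr => _ /imsetP[g Gg ->].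
transitivity (\sum_(y in 'C_G[x] :* g) F (x ^ g)%g); last first.
  by rewrite sumr_const card_rcoset mulr_natl.
apply: eq_big => [y|y]; last by move=> /andP[_ /eqP ->].
rewrite mem_rcoset !inE groupMr ?groupV //; apply: andb_id2l => Gy.
rewrite conjg_set1 sub1set inE conjgM.
apply/eqP/eqP => [-> | e]; first by rewrite conjgK.
by rewrite -{2}e conjgKV.
Qed.

Lemma omega_Ind G H (phi : 'CF(H)) x :
  H \subset G -> x \in G -> phi 1%g != 0 ->
  omega ('Ind[G] phi) x = \sum_(z in x ^: G) phi z / phi 1%g.
Proof.
move=> sHG Gx nz_phi1.
rewrite /omega cfIndE // sum_conjg_class // cfInd1 // -index_cent1 -mulr_suml.
have card_nz (K : {group gT}) : #|K|%:R != 0 :> algC.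
  by rewrite pnatr_eq0 -lt0n cardG_gt0.
have index_nz : #|G : H|%:R != 0 :> algC by rewrite pnatr_eq0 -lt0n indexg_gt0.
have LagrangeGCH : (#|G : 'C_G[x]| * #|'C_G[x]| = #|G : H| * #|H|)%N.
  by rewrite !(mulnC #|G : _|) !Lagrange ?subsetIl.
have := congr1 (GRing.natmul (1 : algC)) LagrangeGCH; rewrite !natrM => eqGCH.
rewrite (canRL (mulfK (card_nz _)) eqGCH).
by field; rewrite nz_phi1 index_nz !card_nz.
Qed.

End ClassSums.

Lemma bigdprod_conj_first_factor (gT : finGroupType) (G N : {group gT}) t
    (Si : 'I_t.+1 -> {group gT}) :
  \big[dprod/1%g]_(i < t.+1) Si i = N ->
  (forall i g, g \in G -> exists j, Si i :^ g = Si j) ->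
  exists R : {group gT}, Si ord0 \x R = N /\
    forall g, g \in G -> Si ord0 :^ g = Si ord0 \/ Si ord0 :^ g \subset R.
Proof.
rewrite big_ord_recl => defN conjSi.
have [[_ R _ defR] _ _ _] := dprodP defN.
exists R; split=> [|g Gg]; first by rewrite -defR.
have [j ->] := conjSi ord0 g Gg.
case: (unliftP ord0 j) => [k ->|->]; [right | by left].
by rewrite -(bigdprodWY defR) (bigD1 k) //= joing_subl.
Qed.

Lemma cfInd_irr_Inertia_sub (gT : finGroupType) (G H N : {group gT})
    (t : Iirr N) (i : Iirr H) :
  N <| G -> N \subset H -> H \subset G -> 'I_G['chi_t] \subset H ->
  t \in irr_constt ('Res[N] 'chi_i) -> 'Ind[G] 'chi_i \in irr G.
Proof.
move=> nsNG sNH sHG sTH Nt; have nsNH := normalS sNH sHG nsNG.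
have eqT : 'I_H['chi_t]%G = 'I_G['chi_t]%G.
  by apply/val_inj/eqP; rewrite eqEsubset setSI //= subsetI sTH subsetIr.
have [irr_IndH _ imIndH _ _] := constt_Inertia_bijection t nsNH.
have [irr_IndG _ _ _ _] := constt_Inertia_bijection t nsNG.
have /imsetP[s Ts ->] : i \in Ind_Iirr H @: irr_constt ('Ind['I_H['chi_t]] 'chi_t).
  by rewrite imIndH constt_Ind_Res.
rewrite cfIirrE ?irr_IndH // cfIndInd ?subsetIl //.
have IndG_irr (T : {group gT}) : T = 'I_G['chi_t]%G ->
    {in irr_constt ('Ind[T] 'chi_t), forall s, 'Ind[G] 'chi[T]_s \in irr G}.
  by move->; apply: irr_IndG.
exact: IndG_irr eqT s Ts.
Qed.

Section PrincipalBlock.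
Variables (p : nat) (M : pred algC).
Hypotheses (pr_p : prime p) (maxM : max_ideal_over p M).

Fact max_ideal_zmod_closed : zmod_closed M.
Proof. by case: maxM => _ [M0 [MB _]]; split. Qed.
HB.instance Definition _ := GRing.isZmodClosed.Build algC M max_ideal_zmod_closed.

Lemma natr_dvd_in_ideal n : (p %| n)%N -> n%:R \in M.
Proof.
case: maxM => _ [_ [_ [_ [Mp _]]]] /dvdnP[k ->].
by rewrite natrM mulr_natl rpredMn.
Qed.

Lemma natr_coprime_notin_ideal n : coprime p n -> n%:R \notin M.
Proof.
case: maxM => _ [_ [_ [_ [_ [M'1 _]]]]] co_pn; apply: contra M'1 => Mn.
have [a _] := Bezoutl n (prime_gt0 pr_p); rewrite (eqP co_pn) => /dvdnP[k def1].
have -> : 1 = (k * p)%:R - n%:R *+ a :> algC.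
  by rewrite -def1 natrD natrM mulr_natl addrK.
by apply: rpredB; [apply/natr_dvd_in_ideal/dvdn_mull | apply: rpredMn].
Qed.

Lemma principal_block_weighted_sum (gT : finGroupType) (X : {group gT})
    (chi : 'CF(X)) (w : gT -> nat) :
  in_principal_block M chi -> {in X &, forall y z, w (y ^ z)%g = w y} ->
  \sum_(y in X) (w y)%:R * (chi y / chi 1%g - 1) \in M.
Proof.
move=> [_ blockX] wJ; rewrite sum_by_classes; last first.
  by move=> y z Xy Xz; rewrite cfunJ ?wJ.
apply: rpred_sum => xG /repr_classesP[Xy defxG]; rewrite mulrCA mulr_natl.
apply: rpredMn; rewrite {1}defxG; set y := repr xG.
by have := blockX y Xy; rewrite /omega mulrBr mulr1 mulrA.
Qed.

Lemma principal_block_p_dvd_normal (gT : finGroupType) (X K : {group gT})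
    (i : Iirr X) :
  K <| X -> in_principal_block M 'chi_i -> ~~ (K \subset cfker 'chi_i) ->
  (p %| #|K|)%N.
Proof.
move=> nsKX blockX notKker; have [sKX nKX] := andP nsKX.
have sum_chiK : \sum_(y in K) 'chi_i y = 0.
  have : '['Res[K] 'chi_i, 1] = 0.
    by apply: contraNeq notKker; rewrite -irr0 -irr_consttE; apply: constt0_Res_cfker.
  rewrite cfdotE => /eqP; rewrite mulf_eq0 invr_eq0 pnatr_eq0.
  rewrite -[#|K| == 0%N]negbK -lt0n cardG_gt0 /= => /eqP sum0.
  rewrite -[RHS]sum0; apply: eq_bigr => y Ky.
  by rewrite cfResE // cfun1E Ky conjC1 mulr1.
have wJ : {in X &, forall y z, nat_of_bool ((y ^ z)%g \in K) = (y \in K)}.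
  by move=> y z Xy Xz; rewrite memJ_norm // (subsetP nKX).
have := principal_block_weighted_sum blockX wJ.
rewrite (big_setID K) /= (setIidPr sKX) [X in _ + X]big1 ?addr0; last first.
  by move=> y /setDP[_ /negPf->]; rewrite mul0r.
rewrite (eq_bigr (fun y => 'chi_i y / 'chi_i 1%g - 1)) => [|y ->]; last first.
  by rewrite mul1r.
rewrite sumrB -mulr_suml sum_chiK mul0r sumr_const sub0r rpredN => MK.
by apply: contraLR MK => not_pK; rewrite natr_coprime_notin_ideal ?prime_coprime.
Qed.

Lemma principal_block_mod_sum (gT : finGroupType) (H C : {group gT})
    (i : Iirr (H / C)) (A : {set gT}) :
  C <| H -> A \subset H -> H \subset 'N(A) -> in_principal_block M 'chi_i ->
  \sum_(z in A) (('chi_i %% C)%CF z / ('chi_i %% C)%CF 1%g - 1) \in M.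
Proof.
move=> nsCH sAH nAH blockHC; have nCH := normal_norm nsCH.
pose fibre q := [set z in A | coset C z == q].
have -> : \sum_(z in A) (('chi_i %% C)%CF z / ('chi_i %% C)%CF 1%g - 1) =
    \sum_(q in (H / C)%g) #|fibre q|%:R * ('chi_i q / 'chi_i 1%g - 1).
  rewrite (partition_big (coset C) (mem (H / C)%g)) /=; last first.
    by move=> z Az; rewrite mem_quotient ?(subsetP sAH).
  apply: eq_bigr => q _; rewrite mulr_natl -sumr_const.
  apply: eq_big => [z|z]; first by rewrite inE.
  by move=> /andP[Az /eqP <-]; rewrite cfModE ?cfMod1 ?(subsetP sAH).
have fibreJ_leq : {in (H / C)%g &, forall q r, #|fibre q| <= #|fibre (q ^ r)%g|}%N.
  move=> q _ _ /morphimP[h _ Hh ->]; rewrite -(cardJg _ h).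
  apply/subset_leq_card/subsetP => _ /imsetP[z /setIdP[Az /eqP <-] ->].
  have Hz := subsetP sAH z Az.
  by rewrite inE memJ_norm ?(subsetP nAH) // morphJ ?(subsetP nCH) // Az; apply/eqP.
apply: (principal_block_weighted_sum blockHC) => q r Hq Hr.
apply/eqP; rewrite eqn_leq fibreJ_leq //=.
by rewrite -{2}(conjgK r q) fibreJ_leq ?groupJ ?groupV.
Qed.

Section ConjugatesOfDirectFactor.
Variables (gT : finGroupType) (G N S R : {group gT}).
Hypotheses (nsNG : N <| G) (defN : S \x R = N).
Hypothesis conjS : forall g, g \in G -> S :^ g = S \/ S :^ g \subset R.

Let sNG : N \subset G := normal_sub nsNG.
Let sSN : S \subset N. Proof. by have [_ <- _ _] := dprodP defN; apply: mulG_subl. Qed.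
Let sRN : R \subset N. Proof. by have [_ <- _ _] := dprodP defN; apply: mulG_subr. Qed.
Let cSR : R \subset 'C(S). Proof. by have [_ _ -> _] := dprodP defN. Qed.
Let tiSR : S :&: R = 1%g. Proof. by have [_ _ _ ->] := dprodP defN. Qed.

Let sSG : S \subset G := subset_trans sSN sNG.
Let sRG : R \subset G := subset_trans sRN sNG.

Let sN_NGS : N \subset 'N_G(S).
Proof.
have [_ <- _ _] := dprodP defN.
by rewrite mul_subG // subsetI ?sSG ?sRG ?normG // (subset_trans cSR) ?cent_sub.
Qed.

Lemma subcent1_sub_normaliser g : g \in S^# -> 'C_G[g] \subset 'N_G(S).
Proof.
case/setD1P=> ntg Sg; apply/subsetP => z /setIP[Gz /cent1P czg].
case: (conjS Gz) => [nSz | sSzR]; first by rewrite inE Gz; apply/normP.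
have gz : (g ^ z)%g = g by rewrite conjgE -czg mulKg.
have : g \in S :&: R by rewrite inE Sg (subsetP sSzR) // -gz memJ_conjg.
by rewrite tiSR inE (negPf ntg).
Qed.

Lemma cfInd_irr_normaliser (chi : 'CF('N_G(S))) :
  chi \in irr 'N_G(S) -> R \subset cfker chi -> ~~ (S \subset cfker chi) ->
  'Ind[G] chi \in irr G.
Proof.
case/irrP=> i ->{chi} kerR notkerS; have Nchi := irr_char i.
have [t Rt notkerSt] : exists2 t, t \in irr_constt ('Res[N] 'chi_i)
                                 & ~~ (S \subset cfker 'chi[N]_t).
  have notkerS_N : ~~ (S \subset cfker ('Res[N] 'chi_i)).
    by rewrite cfker_Res // subsetI sSN.
  apply/exists_inP; rewrite -negb_forall_in; apply: contra notkerS_N => /forall_inP.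
  by rewrite cfkerE ?cfRes_char // subsetI sSN => /bigcapsP.
have kerRt : R \subset cfker 'chi_t.
  apply: subset_trans (cfker_constt (cfRes_char _ Nchi) Rt).
  by rewrite cfker_Res // subsetI sRN.
apply: (cfInd_irr_Inertia_sub nsNG sN_NGS (subsetIl _ _) _ Rt).
apply/subsetP => g /setIP[Gg /setIdP[nNg /eqP tg]].
case: (conjS Gg) => [nSg | sSgR]; first by rewrite inE Gg; apply/normP.
case/negP: notkerSt; rewrite -(conjSg _ _ g) -cfker_conjg // tg.
exact: subset_trans sSgR kerRt.
Qed.

Lemma p_dvd_card_class_diff_normaliser x :
  (p %| #|S|)%N -> x \in G -> (p %| #|x ^: G :\: 'N_G(S)|)%N.
Proof.
move=> p_dvd_S Gx; have [g Sg og] := Cauchy pr_p p_dvd_S.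
have p_g : p.-group <[g]> by rewrite /pgroup -orderE og pnat_id.
have NGSg : g \in 'N_G(S) by rewrite (subsetP sN_NGS) ?(subsetP sSN).
have actJ : [acts <[g]>, on x ^: G :\: 'N_G(S) | 'J].
  rewrite astabsJ normsD // cycle_subG ?(subsetP (normG _)) //.
  by rewrite (subsetP (class_norm x G)) ?(subsetP sSG).
have ntg : g \in S^# by rewrite !inE Sg -order_eq1 og eqn_leq leqNgt prime_gt1.
have no_fixed : 'Fix_(x ^: G :\: 'N_G(S) | 'J)(<[g]>) = set0.
  apply/setP => z; rewrite in_set0 inE; apply/negP => /andP[/setDP[xGz notNz] /afixP fixz].
  have Gz : z \in G by case/imsetP: xGz => y Gy ->; rewrite groupJ.
  have zg : (z ^ g)%g = z := fixz g (cycle_id g).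
  have cgz : z \in 'C_G[g].
    by rewrite inE Gz; apply/cent1P; rewrite /commute -{2}zg conjgE mulKVg.
  by case/negP: notNz; apply: (subsetP (subcent1_sub_normaliser ntg)).
by have := pgroup_fix_mod p_g actJ; rewrite no_fixed cards0 mod0n => /eqP.
Qed.

Lemma cfInd_mod_principal_block (beta : Iirr ('N_G(S) / 'C_G(S))) :
  in_principal_block M 'chi_beta ->
  ~~ (S \subset cfker ('chi_beta %% 'C_G(S))%CF) ->
  in_principal_block M ('Ind[G] ('chi_beta %% 'C_G(S))%CF).
Proof.
set alpha := ('chi_beta %% _)%CF => blockQ notkerS; have nsCH := subcent_normal G S.
have sSH : S \subset 'N_G(S) by rewrite subsetI sSG normG.
split.
  apply: cfInd_irr_normaliser notkerS; first by rewrite cfMod_irr ?mem_irr.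
  by apply: subset_trans (cfker_mod _ nsCH); rewrite subsetI sRG.
move=> x Gx.
have p_dvd_S : (p %| #|S|)%N.
  apply: dvdn_trans (dvdn_quotient S 'C_G(S)).
  apply: principal_block_p_dvd_normal (quotient_normal _ _) blockQ _.
    by rewrite normal_subnorm.
  by rewrite -sub_cfker_mod // (subset_trans sSH) ?normal_norm.
have alpha1_nz : alpha 1%g != 0 by rewrite cfMod1 irr1_neq0.
rewrite omega_Ind ?subsetIl // -[#|_|%:R]sumr_const -sumrB.
rewrite (big_setID 'N_G(S)) /= rpredD //.
  apply: principal_block_mod_sum nsCH (subsetIr _ _) _ blockQ.
  rewrite normsI ?normG //; apply: subset_trans (subsetIl _ _) (class_norm x G).
rewrite (eq_bigr (fun _ => -1)) => [|z /setDP[_ notNz]]; last first.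
  by rewrite cfun0 // mul0r sub0r.
rewrite sumr_const mulNrn rpredN.
exact/natr_dvd_in_ideal/p_dvd_card_class_diff_normaliser.
Qed.

End ConjugatesOfDirectFactor.

End PrincipalBlock.

Theorem lemma2p2 (gT : finGroupType) (G : {group gT}) (p : nat)
  (M : pred algC) (t : nat) (Si : 'I_t.+1 -> {group gT})
  (N : {group gT}) (beta : Iirr ('N_G(Si ord0) / 'C_G(Si ord0))) :
  prime p ->
  max_ideal_over p M ->
  (\big[dprod/1%g]_(i < t.+1) Si i)%g = N ->
  (N <| G)%g ->
  (forall i g, g \in G -> exists j, (Si i :^ g)%g = Si j) ->
  in_principal_block M ('chi_beta) ->
  ~~ (Si ord0 \subset cfker ('chi_beta %% 'C_G(Si ord0))%CF) ->
  in_principal_block M ('Ind[G] ('chi_beta %% 'C_G(Si ord0))%CF).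
Proof.
move=> pr_p maxM defN nsNG conjSi.
have [R [defSR conjS]] := bigdprod_conj_first_factor defN conjSi.
apply: (cfInd_mod_principal_block pr_p maxM nsNG defSR conjS).
Qed.
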